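(* Let $Q\in\mathbf{R}^{n\times n}$ be orthogonal, $V\in\mathbf{R}^{m\times n}$ with $VV^T=I_m$, and suppose the pair $(Q,V)$ is observable. Then for every $\sigma\in\mathbf{C}$ with $|\sigma|<1$, the matrix $Q-(1-\sigma)QV^TV$ is Schur stable.
   Context: A real matrix $Q$ is orthogonal if $QQ^T=Q^TQ=I$. A matrix is Schur stable if all its eigenvalues have modulus $<1$. $(Q,V)$ observable means the standard observability condition (no eigenvector $w$ of $Q$ with $Vw=0$). *)

From HB Require Import structures.
From mathcomp Require Import all_boot all_order all_algebra.
Set Implicit Arguments. Unset Strict Implicit. Unset Printing Implicit Defensive.
Import Order.TTheory GRing.Theory Num.Theory.
Local Open Scope ring_scope.

(* Real matrices are complex matrices (over a numeric closed field C, e.g. algC,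
   or the complex numbers) all of whose entries are real. *)
Definition real_mx (C : numClosedFieldType) (m n : nat) (A : 'M[C]_(m, n)) : Prop :=
  forall i j, A i j \is Num.real.

Definition orthogonal_mx (C : numClosedFieldType) (n : nat) (Q : 'M[C]_n) : Prop :=
  Q *m Q^T = 1%:M /\ Q^T *m Q = 1%:M.

Definition schur_stable (C : numClosedFieldType) (n : nat) (A : 'M[C]_n) : Prop :=
  forall lam : C, eigenvalue A lam -> `|lam| < 1.

Definition observable (C : numClosedFieldType) (m n : nat)
    (Q : 'M[C]_n) (V : 'M[C]_(m, n)) : Prop :=
  forall (w : 'cV[C]_n) (lam : C), w != 0 -> Q *m w = lam *: w -> V *m w != 0.

From HB Require Import structures.
From mathcomp Require Import all_boot all_order all_algebra.
From mathcomp Require Import sesquilinear spectral.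
Import Order.TTheory GRing.Theory Num.Theory.
Local Open Scope ring_scope.
Local Open Scope sesquilinear_scope.

(* Let v be a left eigenvector, with eigenvalue lam, of
   A = Q (1 - (1 - s) P), where P = V^t* V is the orthogonal projection onto
   the row space of V, and put x = v Q.  As Q is unitary, '[x] = '[v], and
   splitting x along P gives |lam|^2 '[v] = '[v] - (1 - |s|^2) '[x P].  So
   |lam| >= 1 forces x P = 0, making v a left eigenvector of Q orthogonal to
   the rows of V; for unitary Q its conjugate transpose is then a right
   eigenvector killed by V, contradicting observability.  Real orthogonal Q
   is the case Q^t* = Q^T. *)

Local Notation "''[' u , v ]" := (dotmx u v) : ring_scope.
Local Notation "''[' u ]" := (dotmx u u) : ring_scope.

Section ConjugateTranspose.
Context {C : numClosedFieldType}.

Lemma trmxC_mul {m n p} (A : 'M[C]_(m, n)) (B : 'M[C]_(n, p)) :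
  (A *m B)^t* = B^t* *m A^t*.
Proof. by rewrite trmx_mul map_mxM. Qed.

Lemma trmxCZ {m n} (a : C) (A : 'M[C]_(m, n)) : (a *: A)^t* = a^* *: A^t*.
Proof. by rewrite linearZ map_mxZ. Qed.

Lemma trmxC_real {m n} {A : 'M[C]_(m, n)} : real_mx A -> A^t* = A^T.
Proof. by move=> hA; apply/matrixP=> i j; rewrite !mxE conj_Creal. Qed.

End ConjugateTranspose.

Section Dotmx.
Context {C : numClosedFieldType}.

(* [hnormDd] restated at [dotmx], so that its result rewrites with the
   [dotmx] lemmas instead of exposing the canonical Hermitian instance. *)
Lemma dnormDd {n} (u v : 'rV[C]_n) : '[u, v] = 0 -> '[u + v] = '[u] + '[v].
Proof. exact: hnormDd. Qed.

Lemma dotmx_mulmxl {n p} (u : 'rV[C]_n) (v : 'rV[C]_p) (M : 'M[C]_(n, p)) :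
  '[u *m M, v] = '[u, v *m M^t*].
Proof. by rewrite !dotmxE trmxC_mul trmxCK mulmxA. Qed.

Lemma dnorm_mulmx_unitary {n p} (u : 'rV[C]_n) {U : 'M[C]_(n, p)} :
  U \is unitarymx -> '[u *m U] = '[u].
Proof. by move=> hU; rewrite dotmx_mulmxl mulmxtVK. Qed.

Variables (n : nat) (P : 'M[C]_n).
Hypotheses (hermP : P^t* = P) (idemP : P *m P = P).

Lemma dotmx_proj_compl (u : 'rV[C]_n) : '[u - u *m P, u *m P] = 0.
Proof.
by rewrite linearBl /= [X in _ - X]dotmx_mulmxl hermP -mulmxA idemP subrr.
Qed.

Lemma dnorm_proj_split (u : 'rV[C]_n) : '[u] = '[u - u *m P] + '[u *m P].
Proof. by rewrite -dnormDd ?dotmx_proj_compl // subrK. Qed.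

Lemma dnorm_sub_scale_proj (s : C) (u : 'rV[C]_n) :
  '[u - (1 - s) *: (u *m P)] = '[u] - (1 - `|s| ^+ 2) * '[u *m P].
Proof.
have -> : u - (1 - s) *: (u *m P) = (u - u *m P) + s *: (u *m P).
  by rewrite scalerBl scale1r opprB addrA addrAC.
rewrite dnormDd; last by rewrite linearZr /= dotmx_proj_compl mulr0.
by rewrite dnormZ [in RHS]dnorm_proj_split mulrBl mul1r opprB addrACA subrr addr0.
Qed.

End Dotmx.

Section UnitaryFeedback.
Context {C : numClosedFieldType}.

Lemma trmxC_gram {m n} (V : 'M[C]_(m, n)) : (V^t* *m V)^t* = V^t* *m V.
Proof. by rewrite trmxC_mul trmxCK. Qed.

Lemma gram_unitary_idem {m n} (V : 'M[C]_(m, n)) :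
  V \is unitarymx -> (V^t* *m V) *m (V^t* *m V) = V^t* *m V.
Proof. by move=> /unitarymxP hV; rewrite mulmxA -(mulmxA _ V) hV mulmx1. Qed.

Lemma observable_left_eigen_unitary {m n} {Q : 'M[C]_n} {V : 'M[C]_(m, n)}
    {v : 'rV[C]_n} {lam : C} :
  Q \is unitarymx -> observable Q V -> v != 0 -> v *m Q = lam *: v ->
  v *m V^t* != 0.
Proof.
move=> hQ hobs v0 hvQ.
have vQQt : v = lam *: (v *m Q^t*) by rewrite scalemxAl -hvQ mulmxtVK.
have lam0 : lam != 0 by apply: contraNneq v0 => lam0; rewrite vQQt lam0 scale0r.
have vQt : v *m Q^t* = lam^-1 *: v by rewrite {2}vQQt scalerA mulVf ?scale1r.
have hQw : Q *m v^t* = lam^-1^* *: v^t*.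
  by rewrite -[Q in LHS]trmxCK -trmxC_mul vQt trmxCZ.
have := hobs _ _ _ hQw; rewrite map_mx_eq0 trmx_eq0 => /(_ v0).
by rewrite -[V]trmxCK -trmxC_mul trmxCK map_mx_eq0 trmx_eq0.
Qed.

Lemma unitary_feedback_schur_stable {m n}
    (Q : 'M[C]_n) (V : 'M[C]_(m, n)) (s : C) :
  Q \is unitarymx -> V \is unitarymx -> observable Q V -> `|s| < 1 ->
  schur_stable (Q - (1 - s) *: (Q *m V^t* *m V)).
Proof.
move=> hQ hV hobs hs lam /eigenvalueP [v hv v0].
rewrite real_ltNge ?normr_real //; apply/negP => hlam.
set P := V^t* *m V; set x := v *m Q.
have hx : x - (1 - s) *: (x *m P) = lam *: v.
  by rewrite -hv mulmxBr -scalemxAr !mulmxA.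
have hnorm : `|lam| ^+ 2 * '[v] = '[v] - (1 - `|s| ^+ 2) * '[x *m P].
  rewrite -[in RHS](dnorm_mulmx_unitary v hQ) -/x.
  by rewrite -dnorm_sub_scale_proj ?trmxC_gram ?gram_unitary_idem // hx dnormZ.
have xP0 : x *m P = 0.
  apply/eqP; rewrite -(dnorm_eq0 (@dotmx C n)) eq_le dnorm_ge0 andbT.
  have s2 : 0 < 1 - `|s| ^+ 2 by rewrite subr_gt0 exprn_ilt1.
  rewrite -(pmulr_rle0 _ s2).
  have -> : (1 - `|s| ^+ 2) * '[x *m P] = '[v] - `|lam| ^+ 2 * '[v].
    by rewrite hnorm opprB addrCA subrr addr0.
  by rewrite subr_le0 ler_peMl ?dnorm_ge0 ?exprn_ege1.
have lam0 : lam != 0 by rewrite -normr_gt0 (lt_le_trans ltr01).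
have hvQ : v *m Q = lam *: v by rewrite -hx xP0 scaler0 subr0.
move/negP: (observable_left_eigen_unitary hQ hobs v0 hvQ); apply.
rewrite -(inj_eq (scalerI lam0)) scaler0 scalemxAl -hvQ -/x.
by rewrite -(mulmxtVK (x *m V^t*) hV) -(mulmxA x) -/P xP0 !mul0mx.
Qed.

End UnitaryFeedback.

Theorem proposition1 (C : numClosedFieldType) (m n : nat)
    (Q : 'M[C]_n) (V : 'M[C]_(m, n))
    (hQr : real_mx Q) (hVr : real_mx V)
    (hQ : orthogonal_mx Q) (hV : V *m V^T = 1%:M)
    (hobs : observable Q V) :
  forall sigma : C, `|sigma| < 1 ->
    schur_stable (Q - (1 - sigma) *: (Q *m V^T *m V)).
Proof.
move=> sigma hsigma; rewrite -(trmxC_real hVr).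
apply: unitary_feedback_schur_stable => //; apply/unitarymxP.
- by rewrite (trmxC_real hQr); case: hQ.
- by rewrite (trmxC_real hVr).
Qed.
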